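(* Let $\Gamma$ be a discrete group acting on the closed disk $\mathbb D^m$ and let $\Delta$ be a closed $\Gamma$-invariant subset of $S^{m-1}=\partial\mathbb D^m$ such that the pair $(\mathbb D^m,\Delta)$ satisfies the properties of condition $( *_\Delta)$. Then there is a second $\Gamma$-space $(\mathbb D^{m+1},\Delta)$, where $\Delta$ (by abuse of notation) is a closed subset of $\partial\mathbb D^{m+1}$ identified $\Gamma$-equivariantly with $\Delta$, which also satisfies the properties of condition $( *_\Delta)$, together with a continuous $\Gamma$-equivariant surjection $\mathbb D^m\times I\to\mathbb D^{m+1}$ (with $\Gamma$ acting trivially on $I$) mapping $\Delta\times I$ to $\Delta$ and mapping $(\mathbb D^m-\Delta)\times I$ homeomorphically onto $\mathbb D^{m+1}-\Delta$.
   Context: A pair $(\mathbb D^n,\Delta)$ with an action of $\Gamma$ on $\mathbb D^n$ and $\Delta$ a closed subset of $S^{n-1}=\partial\mathbb D^n$ satisfies the properties of condition $( *_\Delta)$ if: (i) $\Gamma$ acts properly discontinuously and cocompactly on $\mathbb D^n-\Delta$; (ii) for each compact subset $K$ of $\mathbb D^n-\Delta$ and each $\epsilon>0$ there exists $\delta=\delta(K,\epsilon)>0$ such that for each $\gamma\in\Gamma$, if $d(\gamma K,\Delta)<\delta$ then $\mathrm{diam}(\gamma K)<\epsilon$ (distances in a fixed metric on $\mathbb D^n$). *)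

From HB Require Import structures.
From mathcomp Require Import all_boot all_order all_algebra.
From mathcomp Require Import all_classical all_reals all_analysis.
Set Implicit Arguments. Unset Strict Implicit. Unset Printing Implicit Defensive.
Import Order.TTheory GRing.Theory Num.Theory.
Import numFieldNormedType.Exports.
Local Open Scope classical_set_scope.
Local Open Scope ring_scope.

(* Points of R^n are row vectors 'rV[R]_n; the topology is the usual one
   (product topology), and the metric used is the Euclidean one. *)
Definition enorm (R : realType) (n : nat) (x : 'rV[R]_n) : R :=
  Num.sqrt (\sum_(i < n) x ord0 i ^+ 2).

Definition edist (R : realType) (n : nat) (x y : 'rV[R]_n) : R := enorm (x - y).

Definition disk (R : realType) (n : nat) : set 'rV[R]_n := [set x | enorm x <= 1].
Definition sphere (R : realType) (n : nat) : set 'rV[R]_n := [set x | enorm x = 1].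
Arguments disk {R} n.
Arguments sphere {R} n.

Definition unit_interval (R : realType) : set R := [set t | 0 <= t <= 1].
Arguments unit_interval R : clear implicits.

(* distance between two sets (inf of distances; +oo if one is empty) *)
Definition set_dist (R : realType) (n : nat) (A B : set 'rV[R]_n) : \bar R :=
  ereal_inf [set r | exists x y, [/\ A x, B y & r = (edist x y)%:E]].

(* diameter of a set (sup of distances; -oo for the empty set) *)
Definition diam (R : realType) (n : nat) (A : set 'rV[R]_n) : \bar R :=
  ereal_sup [set r | exists x y, [/\ A x, A y & r = (edist x y)%:E]].

Definition disk_action (G : groupType) (R : realType) (n : nat)
  (a : G -> 'rV[R]_n -> 'rV[R]_n) : Prop :=
  [/\ forall g, {within disk n, continuous (a g)},
      forall g x, disk n x -> disk n (a g x),
      forall x, disk n x -> a 1%g x = x &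
      forall g h x, disk n x -> a (g * h)%g x = a g (a h x)].

Definition prop_disc (G : groupType) (R : realType) (n : nat)
  (a : G -> 'rV[R]_n -> 'rV[R]_n) (X : set 'rV[R]_n) : Prop :=
  forall K : set 'rV[R]_n, compact K -> K `<=` X ->
    finite_set [set g : G | exists2 x, K x & K (a g x)].

Definition cocompact (G : groupType) (R : realType) (n : nat)
  (a : G -> 'rV[R]_n -> 'rV[R]_n) (X : set 'rV[R]_n) : Prop :=
  exists K : set 'rV[R]_n, [/\ compact K, K `<=` X &
    forall x, X x -> exists g y, K y /\ x = a g y].

Definition star_cond (G : groupType) (R : realType) (n : nat)
  (a : G -> 'rV[R]_n -> 'rV[R]_n) (Delta : set 'rV[R]_n) : Prop :=
  [/\ prop_disc a (disk n `\` Delta),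
      cocompact a (disk n `\` Delta) &
      forall K : set 'rV[R]_n, compact K -> K `<=` disk n `\` Delta ->
      forall eps : R, 0 < eps -> exists2 delta : R, 0 < delta &
        forall g : G, (set_dist (a g @` K) Delta < delta%:E)%E ->
                      (diam (a g @` K) < eps%:E)%E].

Definition homeo_onto (T : topologicalType) (U : topologicalType)
  (f : T -> U) (A : set T) (B : set U) : Prop :=
  [/\ {within A, continuous f}, f @` A = B,
      {in A &, injective f} &
      exists h : U -> T, {within B, continuous h} /\
        forall y, B y -> A (h y) /\ f (h y) = y].

From Pilot Require Import Defs.
From HB Require Import structures.
From mathcomp Require Import all_boot all_order all_algebra.
From mathcomp Require Import all_classical all_reals all_analysis.
From mathcomp Require Import ring lra.
Import Order.TTheory GRing.Theory Num.Theory.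
Import numFieldNormedType.Exports.
Local Open Scope classical_set_scope.
Local Open Scope ring_scope.

(* Let d(x) be the distance from x to the cone |x| Delta. The lens
   {(v, x) : |x| <= 1, |v| <= 1 - |x| + d(x)} contains D^m, and its vertical
   fibres degenerate exactly over Delta. Stretching I affinely onto these
   fibres and pushing the lens radially onto D^(m+1) along its positively
   homogeneous, Lipschitz gauge yields a continuous surjection
   F : D^m x I -> D^(m+1) that is injective off Delta x I and collapses
   {p} x I to p for p in Delta. Since Delta is invariant, the action
   b_g = F o (a_g x id) o F^-1 is well defined; b_g and F^-1 (off Delta) are
   continuous because D^m x I is compact. Finally |F(x, t) - p| and |x - p|
   are comparable for p in Delta, which carries condition (ii) over. *)

Section Euclid.
Context {R : realType} {n : nat}.
Implicit Types (x y z : 'rV[R]_n).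

Definition dot x y : R := \sum_(i < n) x ord0 i * y ord0 i.

Lemma dotC x y : dot x y = dot y x.
Proof. by apply: eq_bigr => i _; rewrite mulrC. Qed.

Lemma dotDl x y z : dot (x + y) z = dot x z + dot y z.
Proof. by rewrite /dot -big_split; apply: eq_bigr => i _; rewrite mxE mulrDl. Qed.

Lemma dotZl (c : R) x y : dot (c *: x) y = c * dot x y.
Proof. by rewrite /dot mulr_sumr; apply: eq_bigr => i _; rewrite mxE mulrA. Qed.

Lemma dotBl x y z : dot (x - y) z = dot x z - dot y z.
Proof. by rewrite dotDl -scaleN1r dotZl mulN1r. Qed.

Lemma dotDr x y z : dot x (y + z) = dot x y + dot x z.
Proof. by rewrite dotC dotDl !(dotC x). Qed.

Lemma dotZr (c : R) x y : dot x (c *: y) = c * dot x y.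
Proof. by rewrite dotC dotZl dotC. Qed.

Lemma dotBr x y z : dot x (y - z) = dot x y - dot x z.
Proof. by rewrite dotC dotBl !(dotC x). Qed.

Lemma dot_ge0 x : 0 <= dot x x.
Proof. by apply: sumr_ge0 => i _; rewrite -expr2 sqr_ge0. Qed.

Lemma dot_eq0 x : dot x x = 0 -> x = 0.
Proof.
move=> /eqP; rewrite psumr_eq0 => [/allP x0|i _]; last by rewrite -expr2 sqr_ge0.
by apply/rowP => i; rewrite mxE; move: (x0 i (mem_index_enum _)); rewrite mulf_eq0 orbb => /eqP.
Qed.

Lemma enormE x : enorm x = Num.sqrt (dot x x).
Proof. by rewrite /enorm /dot; congr Num.sqrt; apply: eq_bigr => i _; rewrite expr2. Qed.

Lemma enorm_ge0 x : 0 <= enorm x.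
Proof. by rewrite enormE sqrtr_ge0. Qed.

Lemma enorm_sqr x : enorm x ^+ 2 = dot x x.
Proof. by rewrite enormE sqr_sqrtr // dot_ge0. Qed.

Lemma enorm_eq0 x : enorm x = 0 -> x = 0.
Proof. by move=> h; apply: dot_eq0; rewrite -enorm_sqr h expr0n. Qed.

Lemma enorm_gt0 x : x != 0 -> 0 < enorm x.
Proof. by move=> x0; rewrite lt_def enorm_ge0 andbT; apply: contra x0 => /eqP/enorm_eq0 ->. Qed.

Lemma enorm0 : enorm (0 : 'rV[R]_n) = 0.
Proof. by rewrite enormE /dot big1 ?sqrtr0 // => i _; rewrite mxE mul0r. Qed.

Lemma enormZ (c : R) x : enorm (c *: x) = `|c| * enorm x.
Proof. by rewrite !enormE dotZl dotZr mulrA -expr2 sqrtrM ?sqr_ge0 // sqrtr_sqr. Qed.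

Lemma enormN x : enorm (- x) = enorm x.
Proof. by rewrite -scaleN1r enormZ normrN normr1 mul1r. Qed.

Lemma enorm_subC x y : enorm (x - y) = enorm (y - x).
Proof. by rewrite -enormN opprB. Qed.

Lemma CauchySchwarz x y : dot x y <= enorm x * enorm y.
Proof.
have [->|x0] := eqVneq x 0.
  by rewrite enorm0 mul0r /dot big1 // => i _; rewrite mxE mul0r.
have [->|y0] := eqVneq y 0.
  by rewrite enorm0 mulr0 /dot big1 // => i _; rewrite mxE mulr0.
set a := enorm y; set b := enorm x.
have ab0 : 0 < a * b by rewrite mulr_gt0 ?enorm_gt0.
(* expand [0 <= |a x - b y|^2] *)
have := dot_ge0 (a *: x - b *: y).
rewrite dotBl !dotBr !dotZl !dotZr -!enorm_sqr -/a -/b (dotC y x) => h.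
rewrite -(ler_pM2l ab0) -subr_ge0.
have -> : a * b * (b * a) - a * b * dot x y =
   (a * (a * b ^+ 2) - a * (b * dot x y) - (b * (a * dot x y) - b * (b * a ^+ 2))) / 2.
  by field.
by rewrite divr_ge0.
Qed.

Lemma enormD x y : enorm (x + y) <= enorm x + enorm y.
Proof.
rewrite -(ler_pXn2r (isT : (0 < 2)%N)) ?nnegrE ?addr_ge0 ?enorm_ge0 //.
rewrite enorm_sqr dotDl !dotDr -!enorm_sqr (dotC y x) sqrrD.
have := CauchySchwarz x y; lra.
Qed.

Lemma enormB_le x y : enorm (x - y) <= enorm x + enorm y.
Proof. by rewrite -(enormN y) enormD. Qed.

Lemma enorm_triangle x y z : enorm (x - z) <= enorm (x - y) + enorm (y - z).
Proof. by rewrite (le_trans _ (enormD _ _)) // addrA subrK. Qed.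

Lemma enorm_dist_dist x y : `|enorm x - enorm y| <= enorm (x - y).
Proof.
rewrite ler_norml; apply/andP; split.
  have := enorm_triangle y x 0; rewrite !subr0 enorm_subC; lra.
have := enorm_triangle x y 0; rewrite !subr0; lra.
Qed.

Lemma mx_norm_le_enorm x : `|x| <= enorm x.
Proof.
rewrite [`|x|]mx_normrE; apply: bigmax_le => [|[i j] _]; first exact: enorm_ge0.
rewrite /= (ord1 i) -(ler_pXn2r (isT : (0 < 2)%N)) ?nnegrE ?enorm_ge0 //.
rewrite enorm_sqr real_normK ?num_real // /dot (bigD1 j) //= -expr2 lerDl.
by apply: sumr_ge0 => k _; rewrite -expr2 sqr_ge0.
Qed.

Lemma enorm_le_mx_norm x : enorm x <= n%:R * `|x|.
Proof.
have coord_le i : `|x ord0 i| <= `|x|.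
  by rewrite [`|x|]mx_normrE; apply/bigmax_geP; right; exists (ord0, i).
have : enorm x <= \sum_(i < n) `|x ord0 i|.
  rewrite -(ler_pXn2r (isT : (0 < 2)%N)) ?nnegrE ?enorm_ge0 ?sumr_ge0 //.
  rewrite enorm_sqr /dot expr2 mulr_suml; apply: ler_sum => i _.
  rewrite mulr_sumr (bigD1 i) //= -normrM ler_wpDr ?real_ler_norm ?num_real //.
  by apply: sumr_ge0 => j _; rewrite mulr_ge0.
move/le_trans; apply; rewrite -[n in n%:R]card_ord mulr_natl -sumr_const.
exact: ler_sum.
Qed.

End Euclid.

Section Extend.
Context {R : realType} {m : nat}.
Implicit Types (x y : 'rV[R]_m) (v w : R) (P Q : 'rV[R]_m.+1).

(* R^(m+1) = R x R^m with the extra coordinate first: [extend x v] is (v, x). *)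
Definition extend x v : 'rV[R]_m.+1 := row_mx (v%:M : 'rV_1) x.
Definition base P : 'rV[R]_m := rsubmx (P : 'rV_(1 + m)).
Definition height P : R := (lsubmx (P : 'rV_(1 + m))) ord0 ord0.

Lemma base_extend x v : base (extend x v) = x.
Proof. by rewrite /base /extend row_mxKr. Qed.

Lemma height_extend x v : height (extend x v) = v.
Proof. by rewrite /height /extend row_mxKl mxE. Qed.

Lemma extend_base_height P : extend (base P) (height P) = P.
Proof.
rewrite /extend /base /height.
have -> : ((lsubmx (P : 'rV_(1 + m))) ord0 ord0)%:M = lsubmx (P : 'rV_(1 + m)).
  by apply/rowP => i; rewrite (ord1 i) !mxE.
exact: (@hsubmxK _ 1 1 m P).
Qed.

Lemma extend_inj x y v w : extend x v = extend y w -> x = y /\ v = w.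
Proof.
by move=> e; split; [rewrite -(base_extend x v) e base_extend
                    | rewrite -(height_extend x v) e height_extend].
Qed.

Lemma extendB x y v w : extend x v - extend y w = extend (x - y) (v - w).
Proof.
rewrite /extend; change ((row_mx v%:M x : 'rV_(1 + m)) - row_mx w%:M y =
  row_mx (v - w)%:M (x - y)).
by rewrite opp_row_mx add_row_mx raddfB.
Qed.

Lemma extendZ (c : R) x v : c *: extend x v = extend (c *: x) (c * v).
Proof.
rewrite /extend; change (c *: (row_mx v%:M x : 'rV_(1 + m)) = row_mx (c * v)%:M (c *: x)).
by rewrite scale_row_mx scale_scalar_mx.
Qed.

Lemma dot_extend x v y w : dot (extend x v) (extend y w) = dot x y + v * w.
Proof.
rewrite /dot /extend.
change (\sum_(i < 1 + m) (row_mx v%:M x : 'rV_(1 + m)) ord0 i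
                          * (row_mx w%:M y : 'rV_(1 + m)) ord0 i
  = \sum_(i < m) x ord0 i * y ord0 i + v * w).
rewrite big_split_ord /= addrC big_ord1 !row_mxEl !mxE /=.
by congr (_ + _); apply: eq_bigr => i _; rewrite !row_mxEr.
Qed.

Lemma enorm_extend_sqr x v : enorm (extend x v) ^+ 2 = enorm x ^+ 2 + v ^+ 2.
Proof. by rewrite !enorm_sqr dot_extend expr2. Qed.

Lemma enorm_le_extend x v : enorm x <= enorm (extend x v).
Proof.
rewrite -(ler_pXn2r (isT : (0 < 2)%N)) ?nnegrE ?enorm_ge0 //.
by rewrite enorm_extend_sqr lerDl sqr_ge0.
Qed.

Lemma abs_le_extend x v : `|v| <= enorm (extend x v).
Proof.
rewrite -(ler_pXn2r (isT : (0 < 2)%N)) ?nnegrE ?enorm_ge0 //.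
by rewrite enorm_extend_sqr real_normK ?num_real // lerDr sqr_ge0.
Qed.

Lemma enorm_extend_le x v : enorm (extend x v) <= enorm x + `|v|.
Proof.
rewrite -(ler_pXn2r (isT : (0 < 2)%N)) ?nnegrE ?addr_ge0 ?enorm_ge0 //.
rewrite enorm_extend_sqr sqrrD real_normK ?num_real //.
by rewrite -addrA lerD2l lerDr mulrn_wge0 // mulr_ge0 // enorm_ge0.
Qed.

Lemma enorm_extend0 x : enorm (extend x 0) = enorm x.
Proof.
apply/eqP; rewrite -(eqrXn2 (isT : (0 < 2)%N)) ?enorm_ge0 //.
by rewrite enorm_extend_sqr expr0n addr0.
Qed.

Lemma enorm_base_le P : enorm (base P) <= enorm P.
Proof. by rewrite -{2}(extend_base_height P) enorm_le_extend. Qed.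

Lemma abs_height_le P : `|height P| <= enorm P.
Proof. by rewrite -{2}(extend_base_height P) abs_le_extend. Qed.

Lemma baseB P Q : base (P - Q) = base P - base Q.
Proof. by rewrite -(extend_base_height P) -(extend_base_height Q) extendB !base_extend. Qed.

Lemma heightB P Q : height (P - Q) = height P - height Q.
Proof. by rewrite -(extend_base_height P) -(extend_base_height Q) extendB !height_extend. Qed.

Lemma baseZ (c : R) P : base (c *: P) = c *: base P.
Proof. by rewrite -(extend_base_height P) extendZ !base_extend. Qed.

Lemma heightZ (c : R) P : height (c *: P) = c * height P.
Proof. by rewrite -(extend_base_height P) extendZ !height_extend. Qed.

End Extend.
Section MetricContinuity.
Context {R : realType}.

Definition metric_cont_on {T U : pseudoMetricType R} (f : T -> U) (A : set T) :=
  forall x, A x -> forall e : R, 0 < e ->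
    exists2 d : R, 0 < d & forall y, A y -> ball x d y -> ball (f x) e (f y).

Lemma metric_cont_within {T U : pseudoMetricType R} (f : T -> U) (A : set T) :
  metric_cont_on f A -> {within A, continuous f}.
Proof.
move=> h; apply/subspace_continuousP => x Ax; apply/cvg_ballP => e e0.
have [d d0 hd] := h x Ax e e0.
by rewrite near_withinE; apply/nbhs_ballP; exists d => // y /hd; apply.
Qed.

Lemma within_metric_cont {T U : pseudoMetricType R} (f : T -> U) (A : set T) :
  {within A, continuous f} -> metric_cont_on f A.
Proof.
move=> /subspace_continuousP h x Ax e e0.
move: (h x Ax) => /cvg_ballP /(_ e e0).
rewrite near_withinE => /nbhs_ballP [d /= d0 hd].
by exists d => // y Ay /hd; apply.
Qed.

Lemma metric_contS {T U : pseudoMetricType R} (f : T -> U) (A B : set T) :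
  A `<=` B -> metric_cont_on f B -> metric_cont_on f A.
Proof.
move=> AB h x Ax e e0; have [d d0 hd] := h x (AB _ Ax) e e0.
by exists d => // y /AB; apply: hd.
Qed.

Lemma eq_metric_cont {T U : pseudoMetricType R} (f g : T -> U) (A : set T) :
  {in A, f =1 g} -> metric_cont_on f A -> metric_cont_on g A.
Proof.
move=> fg h x Ax e e0; have [d d0 hd] := h x Ax e e0.
by exists d => // y Ay bxy; rewrite -!fg ?inE //; apply: hd.
Qed.

Lemma metric_cont_comp {T U V : pseudoMetricType R} (f : T -> U) (g : U -> V)
    (A : set T) (B : set U) :
  (forall x, A x -> B (f x)) -> metric_cont_on f A -> metric_cont_on g B ->
  metric_cont_on (g \o f) A.
Proof.
move=> AB hf hg x Ax e e0.
have [d1 d10 hd1] := hg (f x) (AB _ Ax) e e0.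
have [d d0 hd] := hf x Ax d1 d10.
by exists d => // y Ay bxy /=; apply: hd1; [exact: AB | exact: hd].
Qed.

Lemma ball_eq {U : normedModType R} (a b : U) :
  (forall e : R, 0 < e -> ball a e b) -> a = b.
Proof.
move=> h; have [ab0|] := ltP 0 `|a - b|.
  by have := h _ ab0; rewrite -ball_normE /ball_ /= ltxx.
by rewrite normr_le0 subr_eq0 => /eqP.
Qed.

Section CompactFibre.
Context {T : pseudoMetricType R} {U : normedModType R}.
Context {K : set T} {F : T -> U}.
Hypotheses (K_compact : compact K) (F_cont : metric_cont_on F K).

Lemma compact_fibre_cluster (y0 : U) (Q : set T) :
  (forall d, 0 < d -> exists k, [/\ K k, ball y0 d (F k) & Q k]) ->
  exists2 k, K k /\ F k = y0 &
    forall r, 0 < r -> exists z, [/\ K z, Q z & ball k r z].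
Proof.
move=> hQ; pose P d := [set k | [/\ K k, ball y0 d (F k) & Q k]].
have PF : ProperFilter (filter_from [set d : R | 0 < d] P).
  apply: filter_from_proper => [|d /hQ //].
  apply: filter_from_filter; first by exists 1; exact: ltr01.
  move=> i j /= i0 j0; exists (Num.min i j); first by rewrite /= lt_min i0 j0.
  by move=> z [Kz bz Qz]; split; split => //; apply: le_ball bz;
    rewrite ge_min lexx ?orbT.
have [k [Kk clk]] := K_compact _ PF (ex_intro2 _ _ 1 ltr01 (fun z => fun '(And3 Kz _ _) => Kz)).
have near_k d r : 0 < d -> 0 < r -> exists z, P d z /\ ball k r z.
  move=> d0 r0; have [z [Pz bz]] :=
    clk (P d) (ball k r) (ex_intro2 _ _ d d0 (@subset_refl _ _)) (nbhsx_ballx k r r0).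
  by exists z.
exists k.
  split => //; apply/esym/ball_eq => e e0.
  have e20 : 0 < e / 2 by rewrite divr_gt0.
  have [d d0 hd] := F_cont k Kk _ e20.
  have [z [[Kz bz _] kz]] := near_k _ _ e20 d0.
  by rewrite (splitr e); apply: ball_triangle bz (ball_sym (hd z Kz kz)).
move=> r r0; have [z [[Kz _ Qz] kz]] := near_k 1 r ltr01 r0.
by exists z.
Qed.

Lemma metric_cont_section (B : set U) (h : U -> T) :
  (forall y, B y -> K (h y) /\ F (h y) = y) ->
  (forall y k, B y -> K k -> F k = y -> k = h y) ->
  metric_cont_on h B.
Proof.
move=> hB hfib y0 By0 e e0; apply: contrapT => hn.
have [k [Kk Fk] hk] : exists2 k, K k /\ F k = y0 &
    forall r, 0 < r -> exists z, [/\ K z, ~ ball (h y0) e z & ball k r z].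
  apply: compact_fibre_cluster => d d0; apply: contrapT => hne; apply: hn.
  exists d => // y By bd; apply: contrapT => nb; apply: hne; exists (h y).
  by have [Khy ->] := hB y By.
have [z [_ + kz]] := hk e e0.
by rewrite -(hfib y0 k By0 Kk Fk).
Qed.

Lemma metric_cont_quotient {V : pseudoMetricType R} (B : set U) (Phi : U -> V) :
  (forall y, B y -> exists2 k, K k & F k = y) ->
  metric_cont_on (Phi \o F) K -> metric_cont_on Phi B.
Proof.
move=> hB cPF y0 By0 e e0; apply: contrapT => hn.
have [k [Kk Fk] hk] : exists2 k, K k /\ F k = y0 &
    forall r, 0 < r -> exists z, [/\ K z, ~ ball (Phi y0) e (Phi (F z)) & ball k r z].
  apply: compact_fibre_cluster => d d0; apply: contrapT => hne; apply: hn.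
  exists d => // y By bd; apply: contrapT => nb; apply: hne.
  by have [k Kk Fk] := hB y By; exists k; rewrite Fk.
have [d d0 hd] := cPF k Kk e e0.
have [z [Kz + kz]] := hk d d0.
by have := hd z Kz kz; rewrite /= Fk.
Qed.

End CompactFibre.

Lemma ball_of_enorm {n} (x y : 'rV[R]_n) e : enorm (x - y) < e -> ball x e y.
Proof. by move=> h; rewrite -ball_normE; exact: le_lt_trans (mx_norm_le_enorm _) h. Qed.

Lemma enorm_of_ball {n} (x y : 'rV[R]_n) e : ball x e y -> enorm (x - y) <= n%:R * e.
Proof.
rewrite -ball_normE => /= h; apply: (le_trans (enorm_le_mx_norm _)).
by rewrite ler_wpM2l // ltW.
Qed.

Lemma metric_cont_lipschitz {n k} (f : 'rV[R]_n -> 'rV[R]_k) (A : set 'rV[R]_n) (L : R) :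
  0 < L -> (forall x y, A x -> A y -> enorm (f x - f y) <= L * enorm (x - y)) ->
  metric_cont_on f A.
Proof.
move=> L0 hL x Ax e e0.
have n1 : 0 < n%:R + 1 :> R by rewrite ltr_wpDl.
exists (e / (L * (n%:R + 1))) => [|y Ay /enorm_of_ball bxy]; first by rewrite divr_gt0 ?mulr_gt0.
apply: ball_of_enorm; apply: (le_lt_trans (hL x y Ax Ay)).
have : L * (n%:R * (e / (L * (n%:R + 1)))) < e.
  rewrite (_ : _ * _ = e * (n%:R / (n%:R + 1))); last by field; rewrite !gt_eqF.
  by rewrite gtr_pMr // ltr_pdivrMr // mul1r ltrDl.
have := enorm_ge0 (x - y); nra.
Qed.

Lemma disk_closed n : closed (@disk R n).
Proof.
move=> x cx; rewrite /disk /=; apply/ler_addgt0Pr => e e0.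
have n1 : 0 < n%:R + 1 :> R by rewrite ltr_wpDl.
have [y [dy /enorm_of_ball bxy]] := cx _ (nbhsx_ballx x _ (divr_gt0 e0 n1)).
have := enorm_triangle x y 0; rewrite !subr0.
have : n%:R * (e / (n%:R + 1)) <= e.
  rewrite mulrA ler_pdivrMr // mulrDr mulr1; lra.
move: dy; rewrite /disk /=; lra.
Qed.

Lemma disk_compact n : compact (@disk R n).
Proof.
apply: bounded_closed_compact; last exact: disk_closed.
exists 1; split; first exact: num_real.
move=> M M1 x dx; apply: le_trans (mx_norm_le_enorm _) _.
exact: le_trans dx (ltW M1).
Qed.

Lemma unit_interval_compact : compact (unit_interval R).
Proof.
rewrite (_ : unit_interval R = `[0, 1]%classic); first exact: segment_compact.
by apply/seteqP; split => x; rewrite /unit_interval /= in_itv.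
Qed.

Lemma diam_le_center {n} (A : set 'rV[R]_n) q r :
  (forall x, A x -> enorm (x - q) <= r) -> (diam A <= (2 * r)%:E)%E.
Proof.
move=> Aq; apply: ge_ereal_sup => _ [x [y [Ax Ay ->]]]; rewrite lee_fin /Defs.edist.
have := enorm_triangle x q y; rewrite (enorm_subC q y).
by have := Aq x Ax; have := Aq y Ay; lra.
Qed.

End MetricContinuity.

Lemma max_dist_le {R : realDomainType} (a b c d : R) :
  `|Num.max a b - Num.max c d| <= `|a - c| + `|b - d|.
Proof.
have := ler_norm (a - c); have := ler_norm (b - d).
have : c - a <= `|a - c| by rewrite distrC ler_norm.
have : d - b <= `|b - d| by rewrite distrC ler_norm.
rewrite ler_norml; have [ab|ab] := leP a b; have [cd|cd] := leP c d;
  rewrite ?(max_r ab) ?(max_l (ltW ab)) ?(max_r cd) ?(max_l (ltW cd));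
  move=> *; apply/andP; split; lra.
Qed.

Definition shrinks_near {G : groupType} {R : realType} {n : nat}
    (b : G -> 'rV[R]_n -> 'rV[R]_n) (D : set 'rV[R]_n) : Prop :=
  forall K : set 'rV[R]_n, compact K -> K `<=` disk n `\` D ->
  forall eps : R, 0 < eps -> exists2 delta : R, 0 < delta &
    forall g : G, (set_dist (b g @` K) D < delta%:E)%E -> (diam (b g @` K) < eps%:E)%E.

Section Lens.
Context {R : realType} {m : nat} (Delta : set 'rV[R]_m).
Hypothesis Delta_closed : closed Delta.
Hypothesis Delta_sphere : Delta `<=` sphere m.
Implicit Types (x y p : 'rV[R]_m) (P Q : 'rV[R]_m.+1).

Local Notation gaps x := [set enorm (x - enorm x *: p) | p in Delta].

(* Distance from [x] to the cone over [Delta] cut at radius [enorm x]. For an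
   empty [Delta] the infimum would be junk; [enorm x] keeps every property
   proved below. *)
Definition cone_dist x : R :=
  if asbool (Delta !=set0) then inf (gaps x) else enorm x.

Lemma Delta_enorm p : Delta p -> enorm p = 1.
Proof. by move/Delta_sphere. Qed.

Lemma gaps_lbound x : has_lbound (gaps x).
Proof. by exists 0 => _ [p _ <-]; exact: enorm_ge0. Qed.

Lemma gaps_neq0 x : Delta !=set0 -> gaps x !=set0.
Proof. by move=> [p Dp]; exists (enorm (x - enorm x *: p)), p. Qed.

Lemma cone_dist_inf x : Delta !=set0 -> cone_dist x = inf (gaps x).
Proof. by rewrite /cone_dist; case: asboolP. Qed.

Lemma cone_dist_set0 x : ~ (Delta !=set0) -> cone_dist x = enorm x.
Proof. by rewrite /cone_dist; case: asboolP. Qed.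

Lemma cone_dist_ge0 x : 0 <= cone_dist x.
Proof.
have [D0|D0] := pselect (Delta !=set0); last by rewrite cone_dist_set0 // enorm_ge0.
rewrite cone_dist_inf //; apply: lb_le_inf; first exact: gaps_neq0.
by move=> _ [p _ <-]; exact: enorm_ge0.
Qed.

Lemma cone_dist_le x p : Delta p -> cone_dist x <= enorm (x - enorm x *: p).
Proof.
move=> Dp; rewrite cone_dist_inf; last by exists p.
by apply: ge_inf; [exact: gaps_lbound | exists p].
Qed.

Lemma cone_dist_le_enorm x : cone_dist x <= 2 * enorm x.
Proof.
have [[p Dp]|D0] := pselect (Delta !=set0); last first.
  by rewrite cone_dist_set0 // ler_peMl ?enorm_ge0 // ler1n.
apply: (le_trans (cone_dist_le x _ Dp)); apply: (le_trans (enormB_le _ _)).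
by rewrite enormZ (Delta_enorm _ Dp) mulr1 ger0_norm ?enorm_ge0 // mulr2n mulrDl mul1r.
Qed.

Lemma cone_dist_lipschitz x y : cone_dist x <= cone_dist y + 2 * enorm (x - y).
Proof.
have [D0|D0] := pselect (Delta !=set0); last first.
  rewrite !cone_dist_set0 //; have := enorm_triangle x y 0; rewrite !subr0.
  have := enorm_ge0 (x - y); lra.
rewrite -lerBlDr [cone_dist y]cone_dist_inf //; apply: lb_le_inf; first exact: gaps_neq0.
move=> _ [p Dp <-]; rewrite lerBlDr; apply: (le_trans (cone_dist_le x _ Dp)).
have -> : x - enorm x *: p = (y - enorm y *: p) + (x - y) - (enorm x - enorm y) *: p.
  by apply/rowP => i; rewrite !mxE; ring.
apply: (le_trans (enormB_le _ _)); apply: (le_trans (lerD (enormD _ _) (lexx _))).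
rewrite enormZ (Delta_enorm _ Dp) mulr1.
have := enorm_dist_dist x y; have := ler_norm (enorm x - enorm y); lra.
Qed.

Lemma cone_distZ (c : R) x : 0 <= c -> cone_dist (c *: x) = c * cone_dist x.
Proof.
move=> c0; have [D0|D0] := pselect (Delta !=set0); last first.
  by rewrite !cone_dist_set0 // enormZ ger0_norm.
have gapsZ p : enorm (c *: x - enorm (c *: x) *: p) = c * enorm (x - enorm x *: p).
  by rewrite enormZ ger0_norm // -scalerA -scalerBr enormZ ger0_norm.
rewrite !cone_dist_inf //; apply/eqP; rewrite eq_le; apply/andP; split.
  have [->|cn0] := eqVneq c 0.
    have [p Dp] := D0; rewrite mul0r; apply: ge_inf; first exact: gaps_lbound.
    by exists p => //; rewrite scale0r enorm0 scale0r subr0 enorm0.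
  have c_gt0 : 0 < c by rewrite lt_def cn0 c0.
  rewrite -ler_pdivrMl //; apply: lb_le_inf; first exact: gaps_neq0.
  move=> _ [p Dp <-]; rewrite ler_pdivrMl // -gapsZ.
  by apply: ge_inf; [exact: gaps_lbound | exists p].
apply: lb_le_inf; first exact: gaps_neq0.
move=> _ [p Dp <-]; rewrite gapsZ ler_wpM2l //.
by apply: ge_inf; [exact: gaps_lbound | exists p].
Qed.

Lemma cone_dist_Delta p : Delta p -> cone_dist p = 0.
Proof.
move=> Dp; apply/eqP; rewrite eq_le cone_dist_ge0 andbT.
by apply: (le_trans (cone_dist_le p _ Dp)); rewrite (Delta_enorm _ Dp) scale1r subrr enorm0.
Qed.

Lemma cone_dist_eq0 x : enorm x = 1 -> cone_dist x = 0 -> Delta x.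
Proof.
move=> x1 x0; have [D0|D0] := pselect (Delta !=set0); last first.
  by move: x0; rewrite cone_dist_set0 // x1 => /eqP; rewrite oner_eq0.
apply: Delta_closed => B /nbhs_ballP [r /= r0 rB].
have [_ [p Dp <-]] := inf_adherent r0 (conj (gaps_neq0 x D0) (gaps_lbound x)).
rewrite -cone_dist_inf // x0 add0r x1 scale1r => xp.
by exists p; split => //; apply/rB/ball_of_enorm.
Qed.

Definition lens_height x := 1 - enorm x + cone_dist x.

(* The lens [{extend x v | enorm x <= 1, |v| <= lens_height x}] is the unit
   ball of this positively homogeneous gauge; it pinches exactly over [Delta]. *)
Definition lens_gauge P :=
  Num.max (enorm (base P)) (`|height P| + enorm (base P) - cone_dist (base P)).

Definition radial P := (lens_gauge P / enorm P) *: P.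
Definition radial_inv P := (enorm P / lens_gauge P) *: P.

Lemma lens_height_ge0 {x} : enorm x <= 1 -> 0 <= lens_height x.
Proof. by rewrite /lens_height; have := cone_dist_ge0 x; lra. Qed.

Lemma lens_height_le x : lens_height x <= 1 + enorm x.
Proof. by rewrite /lens_height; have := cone_dist_le_enorm x; lra. Qed.

Lemma lens_height_lipschitz x y : `|lens_height x - lens_height y| <= 3 * enorm (x - y).
Proof.
rewrite /lens_height ler_norml.
have := cone_dist_lipschitz x y; have := cone_dist_lipschitz y x.
have := enorm_dist_dist x y; rewrite (enorm_subC y x) ler_norml => /andP[]; lra.
Qed.

Lemma lens_height_Delta p : Delta p -> lens_height p = 0.
Proof. by move=> Dp; rewrite /lens_height (cone_dist_Delta _ Dp) (Delta_enorm _ Dp) subrr addr0. Qed.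

Lemma lens_height_gt0 {x} : enorm x <= 1 -> ~ Delta x -> 0 < lens_height x.
Proof.
move=> x1 nDx; rewrite lt_def lens_height_ge0 // andbT; apply: contra_notN nDx => /eqP.
rewrite /lens_height => h; have := cone_dist_ge0 x => h0.
by apply: cone_dist_eq0; lra.
Qed.

Lemma lens_height_near x p : Delta p -> lens_height x <= 3 * enorm (x - p).
Proof.
move=> Dp; rewrite /lens_height.
have := cone_dist_lipschitz x p; rewrite (cone_dist_Delta _ Dp).
have := enorm_dist_dist p x; rewrite (Delta_enorm _ Dp) ler_norml enorm_subC => /andP[]; lra.
Qed.

Lemma lens_gauge_le1 x v :
  lens_gauge (extend x v) <= 1 <-> enorm x <= 1 /\ `|v| <= lens_height x.
Proof.
rewrite /lens_gauge base_extend height_extend /lens_height ge_max.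
by split => [/andP[? ?]|[? ?]]; [split|apply/andP; split]; lra.
Qed.

Lemma lens_gauge_ge0 P : 0 <= lens_gauge P.
Proof. by rewrite le_max enorm_ge0. Qed.

Lemma enorm_le_lens_gauge P : enorm P <= 3 * lens_gauge P.
Proof.
rewrite /lens_gauge; set x := base P; set v := height P.
have := le_max (enorm x) (enorm x) (`|v| + enorm x - cone_dist x); rewrite lexx => /= /idP.
have := le_max (`|v| + enorm x - cone_dist x) (enorm x) (`|v| + enorm x - cone_dist x).
rewrite lexx orbT => /idP.
have := cone_dist_le_enorm x.
have : enorm P <= enorm x + `|v| by rewrite -{1}(extend_base_height P) enorm_extend_le.
lra.
Qed.

Lemma lens_gauge_le P : lens_gauge P <= 2 * enorm P.
Proof.
rewrite ge_max; have := enorm_base_le P; have := abs_height_le P.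
have := cone_dist_ge0 (base P); have := enorm_ge0 P.
by move=> *; apply/andP; split; lra.
Qed.

Lemma lens_gauge_gt0 P : P != 0 -> 0 < lens_gauge P.
Proof. by move=> /enorm_gt0; have := enorm_le_lens_gauge P; lra. Qed.

Lemma lens_gauge_lipschitz P Q : `|lens_gauge P - lens_gauge Q| <= 5 * enorm (P - Q).
Proof.
apply: (le_trans (max_dist_le _ _ _ _)).
have base_le : enorm (base P - base Q) <= enorm (P - Q) by rewrite -baseB enorm_base_le.
have := enorm_dist_dist (base P) (base Q).
have : `| `|height P| - `|height Q| | <= enorm (P - Q).
  by apply: (le_trans (ler_dist_dist _ _)); rewrite -heightB abs_height_le.
have : `|cone_dist (base P) - cone_dist (base Q)| <= 2 * enorm (base P - base Q).
  rewrite ler_norml; have := cone_dist_lipschitz (base P) (base Q).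
  have := cone_dist_lipschitz (base Q) (base P); rewrite enorm_subC.
  by move=> *; apply/andP; split; lra.
set hP := `|height P|; set hQ := `|height Q|.
set bP := enorm (base P); set bQ := enorm (base Q).
set cP := cone_dist (base P); set cQ := cone_dist (base Q).
have : `|hP + bP - cP - (hQ + bQ - cQ)| <= `|hP - hQ| + `|bP - bQ| + `|cP - cQ|.
  rewrite (_ : _ - _ = (hP - hQ) + (bP - bQ) - (cP - cQ)); last by ring.
  by apply: (le_trans (ler_normB _ _)); rewrite lerD2r ler_normD.
lra.
Qed.

Lemma lens_gaugeZ (c : R) P : 0 <= c -> lens_gauge (c *: P) = c * lens_gauge P.
Proof.
move=> c0; rewrite /lens_gauge baseZ heightZ enormZ normrM cone_distZ // ger0_norm //.
by rewrite maxr_pMr //; congr (Num.max _ _); ring.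
Qed.

Lemma enorm_radial P : enorm (radial P) = lens_gauge P.
Proof.
have [->|P0] := eqVneq P 0.
  rewrite /radial scaler0 enorm0; apply/eqP; rewrite eq_le lens_gauge_ge0 /=.
  by have := lens_gauge_le 0; rewrite enorm0 mulr0.
rewrite /radial enormZ ger0_norm ?divr_ge0 ?lens_gauge_ge0 ?enorm_ge0 //.
by rewrite divfK // gt_eqF // enorm_gt0.
Qed.

Lemma lens_gauge_radial_inv P : lens_gauge (radial_inv P) = enorm P.
Proof.
have [->|P0] := eqVneq P 0.
  by rewrite /radial_inv scaler0 enorm0 -(enorm_radial 0) /radial scaler0 enorm0.
rewrite /radial_inv lens_gaugeZ ?divr_ge0 ?lens_gauge_ge0 ?enorm_ge0 // divfK //.
by rewrite gt_eqF // lens_gauge_gt0.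
Qed.

Lemma radialK : cancel radial radial_inv.
Proof.
move=> P; have [->|P0] := eqVneq P 0; first by rewrite /radial_inv /radial !scaler0.
have EP := enorm_gt0 _ P0; have NP := lens_gauge_gt0 _ P0.
rewrite /radial_inv enorm_radial {2}/radial lens_gaugeZ ?divr_ge0 ?lens_gauge_ge0 ?enorm_ge0 //.
rewrite /radial scalerA -[RHS]scale1r; congr (_ *: _).
by field; rewrite !gt_eqF.
Qed.

Lemma radial_invK : cancel radial_inv radial.
Proof.
move=> P; have [->|P0] := eqVneq P 0; first by rewrite /radial_inv /radial !scaler0.
have EP := enorm_gt0 _ P0; have NP := lens_gauge_gt0 _ P0.
rewrite /radial lens_gauge_radial_inv {2}/radial_inv enormZ.
rewrite ger0_norm ?divr_ge0 ?lens_gauge_ge0 ?enorm_ge0 //.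
rewrite /radial_inv scalerA -[RHS]scale1r; congr (_ *: _).
by field; rewrite !gt_eqF.
Qed.

Lemma radial_lipschitz P Q : enorm (radial P - radial Q) <= 9 * enorm (P - Q).
Proof.
have [->|Q0] := eqVneq Q 0.
  rewrite /radial scaler0 !subr0 -/(radial P) enorm_radial.
  by have := lens_gauge_le P; have := enorm_ge0 P; lra.
set u := (enorm P)^-1 *: P; set u' := (enorm Q)^-1 *: Q.
have EQ := enorm_gt0 _ Q0.
have u_le1 : enorm u <= 1.
  rewrite /u enormZ normfV ger0_norm ?enorm_ge0 //.
  have [->|P0] := eqVneq P 0; first by rewrite enorm0 mulr0 ler01.
  by rewrite mulVf // gt_eqF // enorm_gt0.
have dir_le : enorm Q * enorm (u - u') <= 2 * enorm (P - Q).
  have eQ : enorm Q *: u' = Q by rewrite /u' scalerA divff ?gt_eqF // scale1r.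
  rewrite -[X in X * _]ger0_norm ?enorm_ge0 // -enormZ scalerBr eQ.
  have [P0|P0] := eqVneq P 0.
    by rewrite /u P0 !(scaler0, sub0r, enormN, add0r); have := enorm_ge0 Q; lra.
  have EP := enorm_gt0 _ P0.
  rewrite (_ : enorm Q *: u - Q = ((enorm Q - enorm P) / enorm P) *: P + (P - Q)); last first.
    by rewrite /u scalerA mulrBl divff ?gt_eqF // scalerBl scale1r addrA subrK.
  apply: (le_trans (enormD _ _)).
  rewrite enormZ normrM normfV (ger0_norm (ltW EP)) divfK ?gt_eqF //.
  by have := enorm_dist_dist P Q; rewrite distrC; lra.
rewrite /radial -[lens_gauge P / _ *: P]scalerA -[lens_gauge Q / _ *: Q]scalerA -/u -/u'.
rewrite (_ : _ - _ = (lens_gauge P - lens_gauge Q) *: u + lens_gauge Q *: (u - u')); last first.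
  by rewrite scalerBl scalerBr addrA subrK.
apply: (le_trans (enormD _ _)); rewrite (enormZ _ u) (enormZ _ (u - u')) (ger0_norm (lens_gauge_ge0 Q)).
have : `|lens_gauge P - lens_gauge Q| * enorm u <= 5 * enorm (P - Q).
  by apply: le_trans (lens_gauge_lipschitz P Q); rewrite ler_piMr.
have : lens_gauge Q * enorm (u - u') <= 2 * enorm Q * enorm (u - u').
  by rewrite ler_wpM2r ?enorm_ge0 ?lens_gauge_le.
lra.
Qed.

Lemma lens_gauge_Delta p : Delta p -> lens_gauge (extend p 0) = 1.
Proof.
move=> Dp; rewrite /lens_gauge base_extend height_extend (cone_dist_Delta _ Dp).
by rewrite (Delta_enorm _ Dp) normr0 add0r subr0 maxxx.
Qed.

Lemma radial_Delta p : Delta p -> radial (extend p 0) = extend p 0.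
Proof.
by move=> Dp; rewrite /radial lens_gauge_Delta // enorm_extend0 (Delta_enorm _ Dp) divr1 scale1r.
Qed.

Lemma radial_inv_Delta p : Delta p -> radial_inv (extend p 0) = extend p 0.
Proof.
by move=> Dp; rewrite /radial_inv lens_gauge_Delta // enorm_extend0 (Delta_enorm _ Dp) divr1 scale1r.
Qed.

Lemma lens_gauge_near P p : Delta p ->
  `|lens_gauge P - enorm P| <= 6 * enorm (P - extend p 0).
Proof.
move=> Dp; have := lens_gauge_lipschitz P (extend p 0); rewrite lens_gauge_Delta //.
have := enorm_dist_dist P (extend p 0); rewrite enorm_extend0 (Delta_enorm _ Dp).
have := ler_normB (lens_gauge P - 1) (enorm P - 1).
by rewrite (_ : lens_gauge P - 1 - (enorm P - 1) = lens_gauge P - enorm P); [lra | ring].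
Qed.

Lemma radial_near P p : Delta p ->
  enorm (radial P - extend p 0) <= 7 * enorm (P - extend p 0).
Proof.
move=> Dp; have := enorm_triangle (radial P) P (extend p 0).
have : enorm (radial P - P) <= `|lens_gauge P - enorm P|.
  have [->|P0] := eqVneq P 0; first by rewrite /radial scaler0 subr0 enorm0 normr_ge0.
  have EP := enorm_gt0 _ P0.
  rewrite (_ : radial P - P = ((lens_gauge P - enorm P) / enorm P) *: P); last first.
    by rewrite /radial -[X in _ - X]scale1r -scalerBl; congr (_ *: _); field; rewrite gt_eqF.
  by rewrite enormZ normrM normfV (ger0_norm (ltW EP)) divfK ?gt_eqF.
have := lens_gauge_near P _ Dp; lra.
Qed.

Lemma radial_inv_near P p : Delta p ->
  enorm (radial_inv P - extend p 0) <= 19 * enorm (P - extend p 0).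
Proof.
move=> Dp; have := enorm_triangle (radial_inv P) P (extend p 0).
have := normr_ge0 (lens_gauge P - enorm P).
have : enorm (radial_inv P - P) <= 3 * `|lens_gauge P - enorm P|.
  have [->|P0] := eqVneq P 0.
    by rewrite /radial_inv scaler0 subr0 enorm0 mulr_ge0 ?normr_ge0.
  have EP := enorm_gt0 _ P0; have NP := lens_gauge_gt0 _ P0.
  rewrite (_ : radial_inv P - P = ((enorm P - lens_gauge P) / lens_gauge P) *: P); last first.
    by rewrite /radial_inv -[X in _ - X]scale1r -scalerBl; congr (_ *: _); field; rewrite gt_eqF.
  rewrite enormZ normrM normfV (ger0_norm (ltW NP)) distrC mulrAC ler_pdivrMr //.
  by have := enorm_le_lens_gauge P; have := normr_ge0 (lens_gauge P - enorm P); nra.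
have := lens_gauge_near P _ Dp; lra.
Qed.


Definition cyl : set ('rV[R]_m * R) := disk m `*` unit_interval R.

Definition pinch (z : 'rV[R]_m * R) : 'rV[R]_m.+1 :=
  radial (extend z.1 ((2 * z.2 - 1) * lens_height z.1)).

(* Over [Delta] the lens height is 0 and the division yields 0, i.e. [t = 1/2]:
   [unpinch] inverts [pinch] only off [Delta]. *)
Definition unpinch P : 'rV[R]_m * R :=
  let Q := radial_inv P in (base Q, (height Q / lens_height (base Q) + 1) / 2).

Lemma cyl_lens {z} : cyl z -> `|(2 * z.2 - 1) * lens_height z.1| <= lens_height z.1.
Proof.
case: z => x t [/= x1 /andP[t0 t1]]; rewrite normrM (ger0_norm (lens_height_ge0 x1)).
by rewrite ler_piMl ?lens_height_ge0 // ler_norml; apply/andP; split; lra.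
Qed.

Lemma pinch_disk {z} : cyl z -> disk m.+1 (pinch z).
Proof.
move=> cz; rewrite /disk /= /pinch enorm_radial.
by apply/lens_gauge_le1; split; [case: cz | exact: cyl_lens].
Qed.

Lemma pinch_Delta p t : Delta p -> pinch (p, t) = extend p 0.
Proof. by move=> Dp; rewrite /pinch /= lens_height_Delta // mulr0 radial_Delta. Qed.

Lemma unpinchK {P} : disk m.+1 P -> cyl (unpinch P) /\ pinch (unpinch P) = P.
Proof.
move=> P1; rewrite /unpinch /=; set Q := radial_inv P.
have [x1 vQ] : enorm (base Q) <= 1 /\ `|height Q| <= lens_height (base Q).
  by apply/lens_gauge_le1; rewrite extend_base_height lens_gauge_radial_inv.
have [h0|hn0] := eqVneq (lens_height (base Q)) 0.
  have Q0 : height Q = 0 by apply/normr0_eq0/eqP; rewrite eq_le normr_ge0 andbT -h0.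
  split; first by split => //=; rewrite Q0 mul0r add0r; apply/andP; split; lra.
  by rewrite /pinch /= h0 mulr0 -Q0 extend_base_height radial_invK.
have h_gt0 : 0 < lens_height (base Q) by rewrite lt_def hn0 lens_height_ge0.
split.
  split => //=; move: vQ; rewrite ler_norml => /andP[h1 h2].
  have : -1 <= height Q / lens_height (base Q) by rewrite ler_pdivlMr //; lra.
  have : height Q / lens_height (base Q) <= 1 by rewrite ler_pdivrMr //; lra.
  by move=> *; apply/andP; split; lra.
rewrite /pinch /=.
have -> : (2 * ((height Q / lens_height (base Q) + 1) / 2) - 1) * lens_height (base Q)
          = height Q by field.
by rewrite extend_base_height radial_invK.
Qed.

Lemma pinchK {z} : cyl z -> ~ Delta z.1 -> unpinch (pinch z) = z.
Proof.
case: z => x t [/= x1 _] nDx; have h_gt0 := lens_height_gt0 x1 nDx.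
rewrite /unpinch /pinch radialK base_extend height_extend /=; congr (_, _).
by field; rewrite gt_eqF.
Qed.

Lemma pinch_eq_Delta {z p} : cyl z -> Delta p -> pinch z = extend p 0 -> Delta z.1.
Proof.
move=> cz Dp e; apply: contrapT => nD.
have := pinchK cz nD; rewrite e /unpinch radial_inv_Delta // base_extend => ez.
by apply: nD; rewrite -ez.
Qed.

Lemma pinch_near {x t p} : cyl (x, t) -> Delta p ->
  enorm (pinch (x, t) - extend p 0) <= 28 * enorm (x - p).
Proof.
move=> cz Dp; apply: (le_trans (radial_near _ _ Dp)); rewrite extendB subr0.
have := enorm_extend_le (x - p) ((2 * t - 1) * lens_height x).
have := cyl_lens cz; have := lens_height_near x _ Dp; rewrite /=; lra.
Qed.

Lemma pinch_far {x t p} : cyl (x, t) -> Delta p ->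
  enorm (x - p) <= 19 * enorm (pinch (x, t) - extend p 0).
Proof.
move=> cz Dp; have [Dx|nDx] := pselect (Delta x).
  rewrite pinch_Delta // extendB subrr enorm_extend0.
  by have := enorm_ge0 (x - p); lra.
rewrite -[x in enorm (x - _)]/((x, t).1) -{1}(pinchK cz nDx) -{1}(base_extend p 0) -baseB.
exact: le_trans (enorm_base_le _) (radial_inv_near _ _ Dp).
Qed.

Lemma pinch_lipschitz {z z'} : cyl z -> cyl z' ->
  enorm (pinch z - pinch z') <= 36 * (enorm (z.1 - z'.1) + `|z.2 - z'.2|).
Proof.
case: z z' => x t [y u] [/= x1 _] [/= _ /andP[u0 u1]]; rewrite /disk /= in x1.
apply: (le_trans (radial_lipschitz _ _)); rewrite extendB.
have := enorm_extend_le (x - y) ((2 * t - 1) * lens_height x - (2 * u - 1) * lens_height y).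
suff : `|(2 * t - 1) * lens_height x - (2 * u - 1) * lens_height y|
       <= 4 * `|t - u| + 3 * enorm (x - y).
  by have := normr_ge0 (t - u); have := enorm_ge0 (x - y); lra.
rewrite (_ : _ - _ = 2 * (t - u) * lens_height x + (2 * u - 1) * (lens_height x - lens_height y));
  last by ring.
apply: (le_trans (ler_normD _ _)); rewrite !normrM.
have : `|lens_height x| <= 2.
  by rewrite ger0_norm ?lens_height_ge0 //; have := lens_height_le x; lra.
have : `|2 * u - 1| <= 1 by rewrite ler_norml; apply/andP; split; lra.
have := lens_height_lipschitz x y; rewrite ger0_norm //.
have := normr_ge0 (t - u); have := normr_ge0 (lens_height x); have := normr_ge0 (2 * u - 1).
have := normr_ge0 (lens_height x - lens_height y); nra.
Qed.

Lemma pinch_cont : metric_cont_on pinch cyl.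
Proof.
move=> z cz e e0.
have m1 : 0 < m%:R + 1 :> R by rewrite ltr_wpDl.
exists (e / (72 * (m%:R + 1))) => [|z' cz' [/enorm_of_ball b1]]; first by rewrite divr_gt0 ?mulr_gt0.
rewrite -ball_normE /= => b2; apply: ball_of_enorm.
apply: (le_lt_trans (pinch_lipschitz cz cz')).
have : 36 * (m%:R * (e / (72 * (m%:R + 1))) + e / (72 * (m%:R + 1))) < e.
  rewrite (_ : 36 * _ = e / 2); last by field; rewrite gt_eqF.
  by rewrite ltr_pdivrMr // ltr_pMr // ltr1n.
have := normr_ge0 (z.2 - z'.2); have := enorm_ge0 (z.1 - z'.1); nra.
Qed.

Lemma cyl_compact : compact cyl.
Proof. exact: compact_setX (disk_compact m) unit_interval_compact. Qed.

Lemma Delta_disk p : Delta p -> disk m p.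
Proof. by move=> Dp; rewrite /disk /= (Delta_enorm _ Dp). Qed.

Definition Delta_up : set 'rV[R]_m.+1 := extend^~ 0 @` Delta.

Lemma metric_cont_extend0 (A : set 'rV[R]_m) : metric_cont_on (extend^~ 0) A.
Proof.
apply: (metric_cont_lipschitz _ _ 1) => // x y _ _.
by rewrite extendB subr0 enorm_extend0 mul1r.
Qed.

Lemma unpinch_compl {P} : (disk m.+1 `\` Delta_up) P ->
  [/\ cyl (unpinch P), ~ Delta (unpinch P).1 & pinch (unpinch P) = P].
Proof.
move=> [dP nDP]; have [cP PP] := unpinchK dP; split => // D1; apply: nDP.
by rewrite -PP; exists (unpinch P).1 => //; case: (unpinch P) D1 => x t /= Dx; rewrite pinch_Delta.
Qed.

Lemma pinch_compl {z} : cyl z -> ~ Delta z.1 -> (disk m.+1 `\` Delta_up) (pinch z).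
Proof.
move=> cz nD; split; first exact: pinch_disk.
by move=> [p Dp e]; apply/nD/(pinch_eq_Delta cz Dp).
Qed.

Lemma unpinch_cont : metric_cont_on unpinch (disk m.+1 `\` Delta_up).
Proof.
apply: (metric_cont_section cyl_compact pinch_cont) => [P /unpinch_compl[] //|P k BP ck Pk].
have [Dk|nDk] := pselect (Delta k.1); last by rewrite -Pk pinchK.
by case: BP => _ []; exists k.1 => //; rewrite -Pk; case: k ck Dk {Pk} => x t _ /= Dx; rewrite pinch_Delta.
Qed.

Lemma Delta_up_closed : closed Delta_up.
Proof.
apply: compact_closed; first exact: norm_hausdorff.
apply: continuous_compact; first exact/metric_cont_within/metric_cont_extend0.
by apply: subclosed_compact Delta_closed (disk_compact m) _ => x /Delta_disk.
Qed.

Lemma Delta_up_sphere : Delta_up `<=` sphere m.+1.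
Proof. by move=> _ [p Dp <-]; rewrite /sphere /= enorm_extend0 (Delta_enorm _ Dp). Qed.

Lemma homeo_Delta_up : homeo_onto (extend^~ 0) Delta Delta_up.
Proof.
split => //; first exact/metric_cont_within/metric_cont_extend0.
  by move=> x y _ _ /extend_inj[].
exists base; split.
  apply/metric_cont_within/(metric_cont_lipschitz _ _ 1) => // P Q _ _.
  by rewrite mul1r -baseB enorm_base_le.
by move=> _ [p Dp <-]; rewrite base_extend.
Qed.

Lemma homeo_pinch : homeo_onto pinch ((disk m `\` Delta) `*` unit_interval R)
                                     (disk m.+1 `\` Delta_up).
Proof.
have sub_cyl : (disk m `\` Delta) `*` unit_interval R `<=` cyl by move=> z [[dz _] Iz].
split.
- by apply/metric_cont_within; exact: metric_contS sub_cyl pinch_cont.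
- apply/seteqP; split => [_ [z zD <-]|P BP].
    by apply: pinch_compl; [exact: sub_cyl | case: zD => -[]].
  by have [[dP IP] nD PP] := unpinch_compl BP; exists (unpinch P).
- move=> z z' /set_mem zD /set_mem z'D e.
  rewrite -(pinchK (sub_cyl _ zD)); last by case: zD => -[].
  by rewrite e pinchK //; [exact: sub_cyl | case: z'D => -[]].
exists unpinch; split; first exact: metric_cont_within unpinch_cont.
by move=> P /unpinch_compl[[dP IP] nD PP].
Qed.

Section Transport.
Context {G : groupType} (a : G -> 'rV[R]_m -> 'rV[R]_m).
Hypothesis a_action : disk_action a.
Hypothesis Delta_inv : forall g x, Delta x -> Delta (a g x).

Lemma act_disk g x : disk m x -> disk m (a g x).
Proof. by case: a_action => _ + _ _; apply. Qed.

Lemma act_compl g x : disk m x -> ~ Delta x -> ~ Delta (a g x).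
Proof.
case: a_action => _ _ a1 aM dx nDx /(Delta_inv g^-1); apply/contra_not: nDx.
by rewrite -aM // mulVg a1.
Qed.

Lemma cyl_act g z : cyl z -> cyl (a g z.1, z.2).
Proof. by case: z => x t [/= dx It]; split => //=; apply: act_disk. Qed.

Definition pinch_act g P := pinch (a g (unpinch P).1, (unpinch P).2).

Lemma pinch_act_wd g z z' : cyl z -> cyl z' -> pinch z = pinch z' ->
  pinch (a g z.1, z.2) = pinch (a g z'.1, z'.2).
Proof.
case: z z' => x t [y u] cz cz' /= e.
have [Dx|nDx] := pselect (Delta x).
  have Dy : Delta y.
    by apply: (pinch_eq_Delta cz' Dx); rewrite -e pinch_Delta.
  have [Dgx Dgy] := (Delta_inv g _ Dx, Delta_inv g _ Dy).
  by move: e; rewrite !pinch_Delta // => /extend_inj[->].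
have [Dy|nDy] := pselect (Delta y).
  by case: nDx; apply: (pinch_eq_Delta cz Dy); rewrite e pinch_Delta.
by move: (pinchK cz nDx); rewrite e pinchK // => -[-> ->].
Qed.

Lemma pinch_actE g z : cyl z -> pinch_act g (pinch z) = pinch (a g z.1, z.2).
Proof.
by move=> cz; have [cu uK] := unpinchK (pinch_disk cz); apply: pinch_act_wd.
Qed.

Lemma pinch_act_cont g : metric_cont_on (pinch_act g) (disk m.+1).
Proof.
apply: (metric_cont_quotient cyl_compact pinch_cont) => [P /unpinchK[] ? ?|].
  by exists (unpinch P).
apply: (eq_metric_cont (fun z => pinch (a g z.1, z.2))) => [z /set_mem cz|].
  by rewrite /= pinch_actE.
apply: (metric_cont_comp _ _ _ _ (cyl_act g) _ pinch_cont) => z [dz Iz] e e0.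
case: a_action => a_cont _ _ _.
have [d d0 hd] := within_metric_cont _ _ (a_cont g) z.1 dz e e0.
exists (Num.min d e) => [|z' [dz' _] [b1 b2]]; first by rewrite lt_min d0 e0.
split => /=; first by apply: hd => //; apply: le_ball b1; rewrite ge_min lexx.
by apply: le_ball b2; rewrite ge_min lexx orbT.
Qed.

Lemma pinch_act_action : disk_action pinch_act.
Proof.
case: a_action => _ _ a1 aM; split.
- by move=> g; apply/metric_cont_within/pinch_act_cont.
- by move=> g P /unpinchK[cP _]; apply/pinch_disk/cyl_act.
- by move=> P /unpinchK[[dP _] PP]; rewrite /pinch_act a1 // -surjective_pairing.
move=> g h P /unpinchK[cP _]; have [dP _] := cP.
rewrite [pinch_act h P]/pinch_act pinch_actE; last exact: cyl_act.
by rewrite /pinch_act /= aM.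
Qed.

Lemma pinch_act_Delta_up g x : Delta x -> pinch_act g (extend x 0) = extend (a g x) 0.
Proof.
move=> Dx; have cx : cyl (x, 0).
  by split; [exact: Delta_disk | rewrite /unit_interval /= lexx ler01].
by rewrite -(pinch_Delta _ 0 Dx) pinch_actE // pinch_Delta //; apply: Delta_inv.
Qed.

Lemma Delta_up_inv g P : Delta_up P -> Delta_up (pinch_act g P).
Proof. by move=> [x Dx <-]; rewrite pinch_act_Delta_up //; exists (a g x); first exact: Delta_inv. Qed.

Definition shadow (K : set 'rV[R]_m.+1) : set 'rV[R]_m := fst @` (unpinch @` K).

Lemma shadow_compact {K} : compact K -> K `<=` disk m.+1 `\` Delta_up -> compact (shadow K).
Proof.
move=> cK KB; apply: continuous_compact.
  by apply: metric_cont_within => z _ e e0; exists e => // z' _ [].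
apply: continuous_compact => //; apply: metric_cont_within.
exact: metric_contS KB unpinch_cont.
Qed.

Lemma shadow_compl {K} : K `<=` disk m.+1 `\` Delta_up -> shadow K `<=` disk m `\` Delta.
Proof. by move=> KB _ [_ [P /KB/unpinch_compl[[dP _] nD _] <-] <-]. Qed.

Lemma shadow_unpinch K P : K P -> shadow K (unpinch P).1.
Proof. by move=> KP; exists (unpinch P) => //; exists P. Qed.

Lemma pinch_act_prop_disc :
  prop_disc a (disk m `\` Delta) -> prop_disc pinch_act (disk m.+1 `\` Delta_up).
Proof.
move=> pd K cK KB; apply: (sub_finite_set _ (pd _ (shadow_compact cK KB) (shadow_compl KB))).
move=> g [P KP KgP]; exists (unpinch P).1; first exact: shadow_unpinch.
have [cP nDP PP] := unpinch_compl (KB _ KP).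
have -> : a g (unpinch P).1 = (unpinch (pinch_act g P)).1.
  by rewrite /pinch_act pinchK //; [exact: cyl_act | case: cP => dP _; exact: act_compl].
exact: shadow_unpinch.
Qed.

Lemma pinch_act_cocompact :
  cocompact a (disk m `\` Delta) -> cocompact pinch_act (disk m.+1 `\` Delta_up).
Proof.
move=> [K [cK KD Kcov]]; have Kcyl : K `*` unit_interval R `<=` cyl by move=> z [/KD[]].
exists (pinch @` (K `*` unit_interval R)); split.
- apply: continuous_compact; last exact: compact_setX cK unit_interval_compact.
  by apply/metric_cont_within; exact: metric_contS Kcyl pinch_cont.
- by move=> _ [z Kz <-]; apply: pinch_compl; [exact: Kcyl | case: Kz => /KD[]].
move=> P /unpinch_compl[[dP IP] nDP PP].
have [g [x [Kx ex]]] := Kcov _ (conj dP nDP).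
exists g, (pinch (x, (unpinch P).2)); split; first by exists (x, (unpinch P).2).
by rewrite pinch_actE; [rewrite /= -ex -surjective_pairing | exact: Kcyl].
Qed.


Lemma pinch_act_shrinks : shrinks_near a Delta -> shrinks_near pinch_act Delta_up.
Proof.
(* [224 = 4 * 56]: by [pinch_near], [pinch_act g K] stays within [56 rho] of
   [extend p 0]; the factor 19 in [delta] comes from [pinch_far]. *)
move=> shr K cK KB eps eps0; pose rho := eps / 224.
have rho0 : 0 < rho by rewrite divr_gt0.
have [da da0 hda] := shr _ (shadow_compact cK KB) (shadow_compl KB) rho rho0.
exists (Num.min da rho / 19) => [|g]; first by rewrite divr_gt0 // lt_min da0 rho0.
move=> /ereal_inf_lt[_ [_ [_ [[P KP <-] [p Dp <-] ->]]]]; rewrite lte_fin => Pp.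
have [cP _ _] := unpinch_compl (KB _ KP).
have Pp' : enorm (a g (unpinch P).1 - p) < Num.min da rho.
  by apply: (le_lt_trans (pinch_far (cyl_act g _ cP) Dp)); rewrite -ltr_pdivlMl // mulrC.
have small : (diam (a g @` shadow K) < rho%:E)%E.
  apply: hda; apply: (le_lt_trans (ereal_inf_lbound _)).
    exists (a g (unpinch P).1), p; split => //.
    by exists (unpinch P).1 => //; exact: shadow_unpinch.
  by rewrite lte_fin /Defs.edist; apply: (lt_le_trans Pp'); rewrite ge_min lexx.
apply: (le_lt_trans (diam_le_center _ (extend p 0) (56 * rho) _)) => [_ [Q KQ <-]|].
  have [cQ _ _] := unpinch_compl (KB _ KQ).
  apply: (le_trans (pinch_near (cyl_act g _ cQ) Dp)).
  have : enorm (a g (unpinch Q).1 - a g (unpinch P).1) < rho.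
    rewrite -lte_fin; apply: (le_lt_trans _ small); apply: ereal_sup_ubound.
    exists (a g (unpinch Q).1), (a g (unpinch P).1).
    by split; [exists (unpinch Q).1 | exists (unpinch P).1 |] => //; exact: shadow_unpinch.
  have : enorm (a g (unpinch P).1 - p) < rho.
    by apply: (lt_le_trans Pp'); rewrite ge_min lexx orbT.
  have := enorm_triangle (a g (unpinch Q).1) (a g (unpinch P).1) p; lra.
by rewrite lte_fin /rho; lra.
Qed.

Lemma pinch_act_star : star_cond a Delta -> star_cond pinch_act Delta_up.
Proof.
case=> pd cc shr; split; [exact: pinch_act_prop_disc | exact: pinch_act_cocompact |].
exact: pinch_act_shrinks.
Qed.
End Transport.
End Lens.

Theorem lemma3p1 (G : groupType) (R : realType) (m : nat)
  (a : G -> 'rV[R]_m -> 'rV[R]_m) (Delta : set 'rV[R]_m) :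
  disk_action a -> closed Delta -> Delta `<=` sphere m ->
  (forall g x, Delta x -> Delta (a g x)) ->
  star_cond a Delta ->
  exists (b : G -> 'rV[R]_m.+1 -> 'rV[R]_m.+1) (Delta' : set 'rV[R]_m.+1)
         (iota : 'rV[R]_m -> 'rV[R]_m.+1) (F : 'rV[R]_m * R -> 'rV[R]_m.+1),
    [/\ [/\ disk_action b, closed Delta', Delta' `<=` sphere m.+1,
            (forall g y, Delta' y -> Delta' (b g y)) &
            star_cond b Delta'],
        homeo_onto iota Delta Delta',
        (forall g x, Delta x -> iota (a g x) = b g (iota x)),
        {within disk m `*` unit_interval R, continuous F} &
        [/\ forall g x t, disk m x -> unit_interval R t ->
              F (a g x, t) = b g (F (x, t)),
            F @` (disk m `*` unit_interval R) = disk m.+1,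
            forall x t, Delta x -> unit_interval R t -> F (x, t) = iota x &
            homeo_onto F ((disk m `\` Delta) `*` unit_interval R)
                         (disk m.+1 `\` Delta')]].
Proof.
move=> a_action Delta_closed Delta_sphere Delta_inv a_star.
exists (pinch_act Delta a), (Delta_up Delta), (extend^~ 0), (pinch Delta).
split; first split.
- by apply: pinch_act_action.
- by apply: Delta_up_closed.
- by apply: Delta_up_sphere.
- by move=> g; apply: Delta_up_inv.
- by apply: pinch_act_star.
- by apply: homeo_Delta_up.
- by move=> g x Dx; rewrite pinch_act_Delta_up.
- exact/metric_cont_within/pinch_cont.
split.
- by move=> g x t dx It; rewrite pinch_actE.
- apply/seteqP; split => [_ [z cz <-]|P dP]; first exact: pinch_disk.
  by have [cP PP] := unpinchK _ Delta_sphere dP; exists (unpinch Delta P).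
- by move=> x t Dx _; rewrite pinch_Delta.
- by apply: homeo_pinch.
Qed.
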